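(* Every search game (as defined in the context) is weakly acyclic: for every pure strategy profile $s^{1}\in S$ there exists an improvement path $(s^{1},\ldots,s^{T})$ starting at $s^{1}$ such that $s^{T}$ is a pure (Bayesian) Nash equilibrium.
   Context: A search game $G=(N,\Omega,\Pi,\mu,K,c,v)$ consists of: a finite set of players $N=\{1,\ldots,n\}$; a finite set $\Omega$ of locations (the prize is hidden in exactly one location, the true state); for each player $i$ a partition $\Pi_i$ of $\Omega$ into cells, where $\pi_i(\omega)$ denotes the cell of $\Pi_i$ containing $\omega$ (player $i$ observes the cell containing the true location); a common prior $\mu\in\Delta(\Omega)$ with $\mu(\pi_i)>0$ for every cell $\pi_i\in\Pi_i$ and every $i$, where $\mu(E)=\sum_{\omega\in E}\mu(\omega)$; a capacity $K_i\in\mathbb{N}$ for each player; a cost function $c_i:\{0,\ldots,K_i\}\to\mathbb{R}_{\ge 0}$ with $c_i(0)=0$ and $c_i(k+1)-c_i(k)\ge c_i(k)-c_i(k-1)$ for $1\le k\le K_i-1$; rewards $v_i^m(\omega)\ge 0$ for each player $i$, location $\omega$, and $m\in\{1,\ldots,n\}$, with $v_i^{m+1}(\omega)\le v_i^m(\omega)$; and social values $v_{\mathfrak{s}}(\omega)\ge 0$. A pure strategy $s_i$ of player $i$ assigns to each cell $\pi_i\in\Pi_i$ a subset $s_i(\pi_i)\subseteq\pi_i$ with at most $K_i$ elements; $S_i$ is the set of these and $S=\prod_i S_i$. For a profile $s$ let $m_s(\omega)=\sum_{i\in N}\mathbf{1}_{\omega\in s_i(\pi_i(\omega))}$. Player $i$'s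 payoff given location $\omega$ is $u_i(s|\omega)=\mathbf{1}_{\omega\in s_i(\pi_i(\omega))}v_i^{m_s(\omega)}(\omega)-c_i(|s_i(\pi_i(\omega))|)$, and $u_i(s)=\sum_{\omega\in\Omega}\mu(\omega)u_i(s|\omega)$. A profile $s$ is a (pure Bayesian) Nash equilibrium if $u_i(s)\ge u_i(s_i',s_{-i})$ for all $i$ and all $s_i'\in S_i$. A sequence $(s^{1},\ldots,s^{T})$ of pure profiles is an improvement path if for every $t<T$ there is a player $i_t$ with $s^{t}_j=s^{t+1}_j$ for all $j\ne i_t$ and $u_{i_t}(s^{t+1})>u_{i_t}(s^{t})$. *)

From HB Require Import structures.
From mathcomp Require Import all_boot all_order all_algebra.
Set Implicit Arguments. Unset Strict Implicit. Unset Printing Implicit Defensive.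
Import Order.TTheory GRing.Theory Num.Theory.
Local Open Scope ring_scope.

Section SearchGame.
Variables (R : realFieldType) (n : nat) (Omega : finType).

(* Raw data of a search game with players 'I_n (player i+1 in the paper is i). *)
Record search_game := SearchGame {
  cell  : 'I_n -> Omega -> {set Omega};
  prior : Omega -> R;
  cap   : 'I_n -> nat;
  cost  : 'I_n -> nat -> R;              (* c_i (only used on 0..K_i) *)
  rew   : 'I_n -> nat -> Omega -> R;
  soc   : Omega -> R
}.

Variable G : search_game.

Definition valid_game : Prop :=
  (* each Pi_i is a partition of Omega, described by w |-> pi_i(w) *)
  (forall i w, w \in cell G i w) /\
  (forall i w w', w' \in cell G i w -> cell G i w' = cell G i w) /\
  (forall w, 0 <= prior G w) /\ (\sum_w prior G w = 1) /\
  (forall i w, 0 < \sum_(w' in cell G i w) prior G w') /\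
  (forall i, cost G i 0 = 0) /\
  (forall i k, (k <= cap G i)%N -> 0 <= cost G i k) /\
  (forall i k, (1 <= k)%N -> (k <= (cap G i).-1)%N ->
      cost G i k - cost G i k.-1 <= cost G i k.+1 - cost G i k) /\
  (forall i m w, (1 <= m <= n)%N -> 0 <= rew G i m w) /\
  (forall i m w, (1 <= m)%N -> (m.+1 <= n)%N -> rew G i m.+1 w <= rew G i m w) /\
  (forall w, 0 <= soc G w).

(* A pure strategy: a map w |-> s(pi_i(w)), given on locations and constant on cells. *)
Definition strategy := {ffun Omega -> {set Omega}}.
Definition profile := {ffun 'I_n -> strategy}.

Definition valid_strategy (i : 'I_n) (si : strategy) : Prop :=
  (forall w w', w' \in cell G i w -> si w' = si w) /\
  (forall w, si w \subset cell G i w) /\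
  (forall w, (#|si w| <= cap G i)%N).

Definition valid_profile (s : profile) : Prop :=
  forall i, valid_strategy i (s i).

Definition searchers (s : profile) (w : Omega) : nat :=
  #|[set j : 'I_n | w \in s j w]|.

Definition payoff_at (s : profile) (i : 'I_n) (w : Omega) : R :=
  (w \in s i w)%:R * rew G i (searchers s w) w - cost G i #|s i w|.

Definition payoff (s : profile) (i : 'I_n) : R :=
  \sum_w prior G w * payoff_at s i w.

Definition deviate (s : profile) (i : 'I_n) (si : strategy) : profile :=
  [ffun j => if j == i then si else s j].

Definition nash (s : profile) : Prop :=
  forall i (si : strategy), valid_strategy i si -> payoff (deviate s i si) i <= payoff s i.

Definition improvement_step (s t : profile) : Prop :=
  valid_profile t /\
  exists i : 'I_n, (forall j, j != i -> t j = s j) /\ payoff s i < payoff t i.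

Fixpoint improvement_path (s : profile) (p : seq profile) : Prop :=
  match p with
  | [::] => True
  | t :: p' => improvement_step s t /\ improvement_path t p'
  end.

End SearchGame.

(* On one cell a player picks at most [K] locations [X] maximising
   [\sum_(x in X) v x - c #|X|] with [c] convex.  Such a choice is optimal iff
   no single exchange, drop or addition improves it; hence when one value moves,
   one location is forced in or out, or the capacity grows by one, a single
   drop, addition or swap restores optimality.
   Start from [s1] with every player forced to keep exactly its current choice,
   so that [s1] is trivially stable, and release the restrictions one unit at a
   time.  After a release the released player makes at most one swap; this
   changes the crowding at one or two locations, to which one other player
   reacts by one drop or swap, and so on.  Each such cascade is an improvement
   path and terminates, because a potential weighting every choice by its value
   at a frozen crowding strictly increases along it.  Once nothing is
   restricted, stability is the Nash property. *)

From mathcomp Require Import all_boot all_order all_algebra.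
From mathcomp Require Import zify ring lra.
From Stdlib Require Import Classical.
Set Implicit Arguments. Unset Strict Implicit. Unset Printing Implicit Defensive.
Import Order.TTheory GRing.Theory Num.Theory.
Local Open Scope ring_scope.

Section ConvexSelection.
Variables (R : realFieldType) (T : finType) (C : nat -> R) (K : nat).
Hypothesis C_convex :
  forall j, (1 <= j)%N -> (j < K)%N -> C j - C j.-1 <= C j.+1 - C j.

Implicit Types (A B F D S X : {set T}) (u v : T -> R).

Definition mcost j := C j - C j.-1.

Lemma mcost_mono i j : (1 <= i)%N -> (i <= j)%N -> (j <= K)%N -> mcost i <= mcost j.
Proof.
move=> i1; elim: j => [|j IH] ij jK; first by move: (leq_trans i1 ij).
case: (ltngtP i j.+1) ij => // [lt _|-> _]; last exact: lexx.
exact: le_trans (IH lt (ltnW jK)) (C_convex (leq_trans i1 lt) jK).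
Qed.

Lemma cost_addn_ge k d : (k + d <= K)%N -> d%:R * mcost k.+1 <= C (k + d) - C k.
Proof.
elim: d => [|d IH] kdK; first by rewrite mul0r addn0 subrr.
have := IH ltac:(lia); have : mcost k.+1 <= mcost (k + d).+1 by apply: mcost_mono; lia.
rewrite /mcost addnS /= -natr1 mulrDl mul1r; lra.
Qed.

Lemma cost_subn_le k d : (d <= k)%N -> (k <= K)%N -> C k - C (k - d) <= d%:R * mcost k.
Proof.
elim: d => [|d IH] dk kK; first by rewrite subn0 subrr mul0r.
have := IH (ltnW dk) kK; have : mcost (k - d) <= mcost k by apply: mcost_mono; lia.
have -> : (k - d.+1 = (k - d).-1)%N by lia.
rewrite /mcost -natr1 mulrDl mul1r; lra.
Qed.

Lemma card_swap S r y : r \in S -> y \notin S -> #|y |: (S :\ r)| = #|S|.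
Proof.
move=> rS yS; rewrite cardsU1 (cardsD1 r S) rS inE negb_and yS orbT /=.
by rewrite add1n.
Qed.

Lemma sum_swap (f : T -> R) S r y : r \in S -> y \notin S ->
  \sum_(x in y |: (S :\ r)) f x = \sum_(x in S) f x - f r + f y.
Proof.
move=> rS yS; rewrite big_setU1 /=; last by rewrite !inE negb_and yS orbT.
by rewrite [in RHS](big_setD1 r rS) /=; ring.
Qed.

Lemma mem_setU1_count S y x : y \notin S -> (x \in y |: S) = ((x \in S) + (x == y))%N :> nat.
Proof. by move=> yS; rewrite !inE; case: (eqVneq x y) => [->|] /=; rewrite ?(negbTE yS) ?addn0. Qed.

Lemma mem_setD1_count S r x : r \in S -> ((x \in S :\ r) + (x == r))%N = (x \in S) :> nat.
Proof. by move=> rS; rewrite !inE; case: (eqVneq x r) => [->|] /=; rewrite ?rS ?addn0. Qed.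

Lemma mem_swap_count S r y x : r \in S -> y \notin S ->
  ((x \in y |: (S :\ r)) + (x == r) = (x \in S) + (x == y))%N.
Proof.
move=> rS yS; have yr : y != r by apply: contraNneq yS => ->.
rewrite !inE; case: (eqVneq x y) => [->|xy] /=; first by rewrite (negbTE yS) (negbTE yr).
by case: (eqVneq x r) => [->|xr] /=; rewrite ?rS.
Qed.

Lemma card_setD_le1 A B y : A :\ y \subset B -> (#|A :\: B| <= 1)%N.
Proof.
move=> AyB; rewrite -(cards1 y); apply: subset_leq_card; apply/subsetP => x.
rewrite !inE => /andP[xB xA]; apply: contraNT xB => xy.
by apply: (subsetP AyB); rewrite !inE xy.
Qed.

Lemma exists_argmax A (f : T -> R) :
  A != set0 -> exists2 a, a \in A & forall b, b \in A -> f b <= f a.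
Proof.
case/set0Pn=> a0 a0A; case: (@arg_maxP _ _ T a0 (mem A) f a0A) => a aA H.
by exists a => // b /H.
Qed.

Lemma exists_argmin A (f : T -> R) :
  A != set0 -> exists2 a, a \in A & forall b, b \in A -> f a <= f b.
Proof.
move=> /(exists_argmax (fun x => - f x)) [a aA H]; exists a => // b bA.
by rewrite -lerN2 H.
Qed.

Lemma exists_argmax_gt A (f : T -> R) t : [exists w in A, t < f w] ->
  exists w, [/\ w \in A, t < f w & forall b, b \in A -> f b <= f w].
Proof.
case/exists_inP=> w0 w0A lt0; have [|w wA wmax] := @exists_argmax A f.
  by apply/set0Pn; exists w0.
by exists w; split=> //; exact: lt_le_trans lt0 (wmax w0 w0A).
Qed.

Lemma separating_value_ge A B (f : T -> R) t0 :
  (forall a b, a \in A -> b \in B -> f b <= f a) -> (forall a, a \in A -> t0 <= f a) ->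
  exists t, [/\ t0 <= t, forall b, b \in B -> f b <= t & forall a, a \in A -> t <= f a].
Proof.
move=> BA At0; case: (eqVneq B set0) => [->|/(exists_argmax f)[b0 b0B Hb0]].
  by exists t0; split=> // b; rewrite inE.
exists (Num.max t0 (f b0)); split; first by rewrite le_max lexx.
- by move=> b bB; rewrite le_max Hb0 ?orbT.
- by move=> a aA; rewrite ge_max At0 // BA.
Qed.

Lemma separating_value_le A B (f : T -> R) t0 :
  (forall a b, a \in A -> b \in B -> f b <= f a) -> (forall b, b \in B -> f b <= t0) ->
  exists t, [/\ t <= t0, forall b, b \in B -> f b <= t & forall a, a \in A -> t <= f a].
Proof.
move=> BA Bt0; have [|b|t [t0t Bt At]] := @separating_value_ge B A (fun x => - f x) (- t0).
- by move=> b a bB aA; rewrite lerN2 BA.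
- by move=> bB; rewrite lerN2 Bt0.
exists (- t); split; first by rewrite lerNl.
- by move=> b bB; rewrite lerNr At.
- by move=> a aA; rewrite lerNl Bt.
Qed.

Lemma sum_le_card_mul A (f : T -> R) t :
  (forall a, a \in A -> f a <= t) -> \sum_(a in A) f a <= #|A|%:R * t.
Proof. by move=> At; rewrite mulr_natl -sumr_const; apply: ler_sum. Qed.

Lemma sum_ge_card_mul A (f : T -> R) t :
  (forall a, a \in A -> t <= f a) -> #|A|%:R * t <= \sum_(a in A) f a.
Proof. by move=> At; rewrite mulr_natl -sumr_const; apply: ler_sum. Qed.

Definition gain v X := \sum_(x in X) v x - C #|X|.

Lemma gain_eq_values u v X : u =1 v -> gain u X = gain v X.
Proof. by move=> uv; rewrite /gain (eq_bigr _ (fun x _ => uv x)). Qed.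

Lemma gain_eq_off u v X z : (forall x, x != z -> v x = u x) -> z \notin X ->
  gain v X = gain u X.
Proof.
move=> uv zX; rewrite /gain; congr (_ - _); apply: eq_bigr => x xX.
by apply: uv; apply: contraNneq zX => <-.
Qed.

Lemma gain_shift_at u v X z : (forall x, x != z -> v x = u x) -> z \in X ->
  gain v X = gain u X + (v z - u z).
Proof.
move=> uv zX; rewrite /gain (big_setD1 z zX) [\sum_(x in X) u x](big_setD1 z zX) /=.
rewrite (eq_bigr u) => [|x]; first ring.
by rewrite !inE => /andP[/uv].
Qed.

Lemma gain_lt_raise u v S S' : (forall x, u x <= v x) ->
  (forall x, x \in S -> x \notin S' -> v x = u x) ->
  gain u S < gain u S' -> gain v S < gain v S'.
Proof.
move=> uv eqS lt; have gainE X : gain v X = gain u X + \sum_(x in X) (v x - u x).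
  by rewrite /gain sumrB; ring.
suff : \sum_(x in S) (v x - u x) <= \sum_(x in S') (v x - u x) by rewrite !gainE; lra.
rewrite [leLHS]big_mkcond [leRHS]big_mkcond /=; apply: ler_sum => x _.
case: (boolP (x \in S')) => xS'; first by case: (x \in S); rewrite // subr_ge0.
by case: (boolP (x \in S)) => // xS; rewrite eqS // subrr.
Qed.

Lemma gain_sub v S X : gain v S - gain v X =
  \sum_(x in S :\: X) v x - \sum_(x in X :\: S) v x - (C #|S| - C #|X|).
Proof.
rewrite /gain (big_setID X) [\sum_(x in X) _](big_setID S) /= setIC; ring.
Qed.

Lemma gain_swap v S r y : r \in S -> y \notin S ->
  gain v (y |: (S :\ r)) = gain v S - v r + v y.
Proof. by move=> rS yS; rewrite /gain card_swap // sum_swap //; ring. Qed.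

Lemma gain_setU1 v S y : y \notin S ->
  gain v (y |: S) = \sum_(x in S) v x + v y - C #|S|.+1.
Proof. by move=> yS; rewrite /gain big_setU1 // cardsU1 yS /= add1n addrC. Qed.

Lemma gain_setD1 v S r : r \in S ->
  gain v (S :\ r) = \sum_(x in S) v x - v r - C #|S|.-1.
Proof.
by move=> rS; rewrite /gain [in RHS](big_setD1 r rS) [in RHS](cardsD1 r S) rS /=; ring.
Qed.

Definition admissible F D k X := [&& F \subset X, X \subset D & (#|X| <= k)%N].

Lemma admissible_sub F D k X : admissible F D k X -> X \subset D.
Proof. by case/and3P. Qed.

Lemma admissible_widen F F' D D' k X : admissible F D k X ->
  F' \subset F -> D \subset D' -> admissible F' D' k X.
Proof.
move=> /and3P[FX XD Xk] F'F DD'; apply/and3P; split=> //.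
- exact: subset_trans F'F FX.
- exact: subset_trans XD DD'.
Qed.

Lemma admissible_swap F D k S a b : admissible F D k S ->
  a \in S -> a \notin F -> b \in D -> b \notin S -> admissible F D k (b |: (S :\ a)).
Proof.
case/and3P=> FS SD Sk aS aF bD bS; apply/and3P; split.
- apply/subsetP=> x xF; rewrite !inE (subsetP FS) // andbT.
  by apply/orP; right; apply: contraNneq aF => <-.
- by apply/subsetP=> x; rewrite !inE => /orP[/eqP->//|/andP[_ /(subsetP SD)]].
- by rewrite card_swap.
Qed.

Lemma admissible_setD1 F D k S a : admissible F D k S ->
  a \in S -> a \notin F -> admissible F D k (S :\ a).
Proof.
case/and3P=> FS SD Sk aS aF; apply/and3P; split.
- by apply/subsetP=> x xF; rewrite !inE (subsetP FS) // andbT; apply: contraNneq aF => <-.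
- by apply/subsetP=> x; rewrite !inE => /andP[_ /(subsetP SD)].
- by rewrite (cardsD1 a S) aS in Sk; lia.
Qed.

Lemma admissible_setU1 F D k S b : admissible F D k S ->
  b \in D -> (#|S| < k)%N -> admissible F D k (b |: S).
Proof.
case/and3P=> FS SD Sk bD Sk'; apply/and3P; split.
- by apply/subsetP=> x xF; rewrite !inE (subsetP FS) ?orbT.
- by apply/subsetP=> x; rewrite !inE => /orP[/eqP->//|/(subsetP SD)].
- by rewrite cardsU1; case: (b \in S) => /=; lia.
Qed.

Lemma admissible_setD1D F D k X y : admissible F D k X -> y \notin X ->
  admissible F (D :\ y) k X.
Proof.
case/and3P=> FX XD Xk yX; apply/and3P; split=> //.
by apply/subsetP=> x xX; rewrite !inE (subsetP XD) // andbT; apply: contraNneq yX => <-.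
Qed.

Lemma admissible_setU1F F D k X y : admissible F D k X -> y \in X ->
  admissible (y |: F) D k X.
Proof.
case/and3P=> FX XD Xk yX; apply/and3P; split=> //.
by apply/subsetP=> x; rewrite !inE => /orP[/eqP->|/(subsetP FX)].
Qed.

Definition optimal F D k v S :=
  admissible F D k S /\ forall X, admissible F D k X -> gain v X <= gain v S.

Definition locally_optimal F D k v S :=
  [/\ forall a b, a \in S -> a \notin F -> b \in D -> b \notin S -> v b <= v a,
      forall a, a \in S -> a \notin F -> mcost #|S| <= v a &
      (#|S| < k)%N -> forall b, b \in D -> b \notin S -> v b <= mcost #|S|.+1].

(* Exchange arguments suffice: with a convex cost, the value threshold
   separating [S :\: X] from [X :\: S] pays for the change of cardinality. *)
Lemma locally_optimal_optimal F D k v S : (k <= K)%N -> admissible F D k S ->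
  locally_optimal F D k v S -> optimal F D k v S.
Proof.
move=> kK AS [swapS dropS addS]; split=> // X /and3P[FX XD Xk].
case/and3P: AS => FS SD Sk; rewrite -subr_ge0 gain_sub.
have cS := cardsID X S; have cX := cardsID S X; rewrite setIC in cX.
set a := #|S :\: X| in cS *; set b := #|X :\: S| in cX *.
have inSX x : x \in S :\: X -> x \in S /\ x \notin F.
  by rewrite inE => /andP[xX xS]; split=> //; apply: contra xX; apply: (subsetP FX).
have inXS y : y \in X :\: S -> y \in D /\ y \notin S.
  by rewrite inE => /andP[yS yX]; split=> //; apply: (subsetP XD).
have sep x y : x \in S :\: X -> y \in X :\: S -> v y <= v x.
  by move=> /inSX[xS xF] /inXS[yD yS]; apply: swapS.
case: (leqP b a) => ba.
- have [t [t0t Bt At]] := separating_value_ge sep (fun x => ltac:(case/inSX=> ?; exact: dropS)).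
  have := sum_le_card_mul Bt; have := sum_ge_card_mul At.
  have := @cost_subn_le #|S| (a - b) ltac:(lia) (leq_trans Sk kK).
  rewrite (_ : (#|S| - (a - b) = #|X|)%N); last by lia.
  have : (a - b)%N%:R * mcost #|S| <= (a - b)%N%:R * t by apply: ler_wpM2l.
  rewrite -/a -/b [a%:R](_ : _ = b%:R + (a - b)%N%:R :> R) ?mulrDl; first lra.
  by rewrite -natrD; congr _%:R; lia.
- have Sk' : (#|S| < k)%N by lia.
  have [t [tt0 Bt At]] := separating_value_le sep (fun y => ltac:(case/inXS=> ?; exact: addS)).
  have := sum_le_card_mul Bt; have := sum_ge_card_mul At.
  have := @cost_addn_ge #|S| (b - a) ltac:(lia).
  rewrite (_ : (#|S| + (b - a) = #|X|)%N); last by lia.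
  have : (b - a)%N%:R * t <= (b - a)%N%:R * mcost #|S|.+1 by apply: ler_wpM2l.
  rewrite -/a -/b [b%:R](_ : _ = a%:R + (b - a)%N%:R :> R) ?mulrDl; first lra.
  by rewrite -natrD; congr _%:R; lia.
Qed.

Lemma optimal_locally_optimal F D k v S : optimal F D k v S -> locally_optimal F D k v S.
Proof.
case=> AS Sopt; split.
- move=> a b aS aF bD bS; have := Sopt _ (admissible_swap AS aS aF bD bS).
  by rewrite gain_swap //; lra.
- move=> a aS aF; have := Sopt _ (admissible_setD1 AS aS aF).
  by rewrite gain_setD1 // /gain /mcost; lra.
- move=> Sk b bD bS; have := Sopt _ (admissible_setU1 AS bD Sk).
  by rewrite gain_setU1 // /gain /mcost /=; lra.
Qed.

Lemma locally_optimal_setU1F F D k v S z :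
  locally_optimal F D k v S -> locally_optimal (z |: F) D k v S.
Proof.
case=> swapS dropS addS; split=> //.
- by move=> a b aS; rewrite inE negb_or => /andP[_]; apply: swapS.
- by move=> a aS; rewrite inE negb_or => /andP[_]; apply: dropS.
Qed.

Lemma locally_optimal_setD1D F D k v S y :
  locally_optimal F D k v S -> locally_optimal F (D :\ y) k v S.
Proof.
case=> swapS dropS addS; split=> //.
- by move=> a b aS aF; rewrite inE => /andP[_]; apply: swapS.
- by move=> Sk b; rewrite inE => /andP[_]; apply: addS.
Qed.

Lemma optimal_eq_values F D k u v S :
  {in D, u =1 v} -> optimal F D k u S -> optimal F D k v S.
Proof.
move=> uv [AS Sopt]; have gainE X : X \subset D -> gain u X = gain v X.
  by move=> XD; rewrite /gain; congr (_ - _); apply: eq_bigr => x /(subsetP XD)/uv.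
split=> // X AX; rewrite -!gainE ?(admissible_sub AS) ?(admissible_sub AX) //.
exact: Sopt.
Qed.

Lemma optimal_shift_values F D k u v S : optimal F D k u S ->
  (forall x, x \in D -> x \in S -> u x <= v x) ->
  (forall x, x \in D -> x \notin S -> v x <= u x) -> optimal F D k v S.
Proof.
move=> [AS Sopt] upS downS; split=> // X AX.
have gainE Y : gain v Y = gain u Y + \sum_(x in Y) (v x - u x) by rewrite /gain sumrB; ring.
suff : \sum_(x in X) (v x - u x) <= \sum_(x in S) (v x - u x).
  by rewrite !gainE; have := Sopt X AX; lra.
rewrite [leLHS]big_mkcond [leRHS]big_mkcond /=; apply: ler_sum => x _.
case: (boolP (x \in D)) => xD; last first.
  by rewrite (contraNF (subsetP (admissible_sub AX) x) xD)
             (contraNF (subsetP (admissible_sub AS) x) xD).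
case: (boolP (x \in S)) => xS; case: (x \in X) => //.
- by rewrite subr_ge0 upS.
- by rewrite subr_le0 downS.
Qed.

Lemma optimal_max2 F D k v S S' : admissible F D k S -> admissible F D k S' ->
  (forall X, admissible F D k X -> gain v X <= gain v S \/ gain v X <= gain v S') ->
  optimal F D k v S \/ optimal F D k v S' /\ gain v S < gain v S'.
Proof.
move=> AS AS' cover; case: (lerP (gain v S') (gain v S)) => cmp; [left|right].
  by split=> // X /cover[// | XS']; exact: le_trans XS' cmp.
split=> //; split=> // X /cover[XS | //]; exact: le_trans XS (ltW cmp).
Qed.

Lemma locally_optimal_forbid_drop F D k v S z : (#|S| <= K)%N -> z \in S ->
  locally_optimal (z |: F) D k v S -> (forall b, b \in D :\: S -> v b <= mcost #|S|) ->
  locally_optimal F (D :\ z) k v (S :\ z).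
Proof.
move=> SK zS [swapS dropS addS] low.
have notzF a : a \in S :\ z -> a \notin F -> a \in S /\ a \notin z |: F.
  by rewrite !inE negb_or => /andP[-> ->] ->.
have cardS0 : #|S :\ z| = #|S|.-1 by rewrite [in RHS](cardsD1 z S) zS.
split.
- move=> a b /notzF/[apply] -[aS aF]; rewrite !inE => /andP[bz bD].
  by rewrite bz /= => bS; exact: swapS aS aF bD bS.
- move=> a aS0 aF; have S0_gt0 : (0 < #|S :\ z|)%N by apply/card_gt0P; exists a.
  have [aS aF'] := notzF a aS0 aF.
  by apply: le_trans (dropS a aS aF'); apply: mcost_mono; lia.
- move=> _ b; rewrite !inE => /andP[bz bD]; rewrite bz /= => bS.
  rewrite cardS0 prednK; last by apply/card_gt0P; exists z.
  by apply: low; rewrite inE bS bD.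
Qed.

Lemma locally_optimal_forbid_swap F D k v S z w : z \in S -> w \in D :\: S ->
  mcost #|S| < v w -> (forall b, b \in D :\: S -> v b <= v w) ->
  locally_optimal (z |: F) D k v S -> locally_optimal F (D :\ z) k v (w |: (S :\ z)).
Proof.
move=> zS wDS lt wmax [swapS dropS addS]; move: (wDS); rewrite inE => /andP[wS wD].
have notzF a : a \in S :\ z -> a \notin F -> a \in S /\ a \notin z |: F.
  by rewrite !inE negb_or => /andP[-> ->] ->.
split; rewrite ?card_swap //.
- move=> a b aS' aF; rewrite !inE negb_or => /andP[bz bD] /andP[_]; rewrite bz /= => bS.
  case/setU1P: aS' => [->|/notzF/(_ aF)[aS aF']]; first by apply: wmax; rewrite inE bS bD.
  exact: swapS aS aF' bD bS.
- move=> a aS' aF; case/setU1P: aS' => [->|/notzF/(_ aF)[aS aF']]; first exact: ltW.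
  exact: dropS.
- move=> Sk b; rewrite !inE negb_or => /andP[bz bD]; rewrite bz /= => /andP[_ bS].
  exact: addS Sk b bD bS.
Qed.

Lemma optimal_forbid F D k v S z : (k <= K)%N -> admissible F D k S ->
  locally_optimal (z |: F) D k v S -> z \in S -> z \notin F ->
  exists2 S', S' = S :\ z \/ (exists2 w, w \notin S & S' = w |: (S :\ z)) &
              optimal F (D :\ z) k v S'.
Proof.
move=> kK AS locS zS zF; have SK : (#|S| <= K)%N by case/and3P: AS => _ _ /leq_trans->.
case: (boolP [exists w in D :\: S, mcost #|S| < v w]) => [|/exists_inPn low].
  case/exists_argmax_gt=> w [wDS lt wmax]; move: (wDS); rewrite inE => /andP[wS wD].
  exists (w |: (S :\ z)); first by right; exists w.
  apply: locally_optimal_optimal kK _ (locally_optimal_forbid_swap zS wDS lt wmax locS).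
  apply: admissible_setD1D; first by apply: admissible_swap; rewrite ?inE ?zF.
  by rewrite !inE eqxx /= orbF; apply: contraNneq wS => <-.
exists (S :\ z); first by left.
apply: (locally_optimal_optimal kK); last first.
  by apply: locally_optimal_forbid_drop => // b /low; rewrite -leNgt.
apply: admissible_setD1D; last by rewrite !inE eqxx.
by apply: admissible_setD1 => //; rewrite inE zF.
Qed.

Lemma locally_optimal_force_add F D k v S y : (k <= K)%N -> y \notin S -> (#|S| < k)%N ->
  locally_optimal F (D :\ y) k v S -> (forall r, r \in S :\: F -> mcost #|S|.+1 <= v r) ->
  locally_optimal (y |: F) D k v (y |: S).
Proof.
move=> kK yS Sk [swapS dropS addS] high.
have notyF a : a \in y |: S -> a \notin y |: F -> a \in S /\ a \notin F.
  by rewrite !inE negb_or => /orP[/eqP->|aS] /andP[ay aF]; rewrite ?eqxx in ay.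
have notyS b : b \in D -> b \notin y |: S -> b \in D :\ y /\ b \notin S.
  by move=> bD; rewrite !inE negb_or bD andbT => /andP[-> ->].
have cardS' : #|y |: S| = #|S|.+1 by rewrite cardsU1 yS.
split; rewrite ?cardS'.
- by move=> a b /notyF/[apply] -[aS aF] /notyS/[apply] -[bDy bS]; exact: swapS.
- by move=> a /notyF/[apply] -[aS aF]; apply: high; rewrite inE aF aS.
- move=> Sk' b /notyS/[apply] -[bDy bS]; apply: le_trans (addS Sk b bDy bS) _.
  by apply: mcost_mono => //; lia.
Qed.

Lemma locally_optimal_force_swap F D k v S y r : y \notin S -> r \in S :\: F ->
  (forall a, a \in S :\: F -> v r <= v a) -> ((#|S| < k)%N -> v r < mcost #|S|.+1) ->
  locally_optimal F (D :\ y) k v S -> locally_optimal (y |: F) D k v (y |: (S :\ r)).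
Proof.
move=> yS rSF rmin high [swapS dropS addS]; move: (rSF); rewrite inE => /andP[rF rS].
have notyF a : a \in y |: (S :\ r) -> a \notin y |: F -> a \in S /\ a \notin F.
  by rewrite !inE negb_or => /orP[/eqP->|/andP[_ aS]] /andP[ay aF]; rewrite ?eqxx in ay.
have notS' b : b \in D -> b \notin y |: (S :\ r) -> b \in D :\ y /\ (b = r \/ b \notin S).
  move=> bD; rewrite !inE negb_or negb_and negbK => /andP[by_ brS].
  by split; [rewrite by_ bD | case/orP: brS => [/eqP|]; [left | right]].
split; rewrite ?card_swap //.
- move=> a b /notyF/[apply] -[aS aF] /notS'/[apply] -[bDy [->|bS]]; last exact: swapS.
  by apply: rmin; rewrite inE aF aS.
- by move=> a /notyF/[apply] -[aS aF]; exact: dropS.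
- move=> Sk b /notS'/[apply] -[bDy [->|bS]]; last exact: addS.
  exact/ltW/high.
Qed.

Lemma optimal_force F D k v S y : (k <= K)%N -> y \in D -> y \notin F ->
  admissible F (D :\ y) k S -> locally_optimal F (D :\ y) k v S ->
  (forall X, ~~ admissible (y |: F) D k X) \/
  exists2 S', S' = y |: S \/ (exists2 r, r \in S & S' = y |: (S :\ r)) &
              optimal (y |: F) D k v S'.
Proof.
move=> kK yD yF AS locS; have AS' := admissible_widen AS (subxx _) (subsetDl _ _).
have yS : y \notin S by apply/negP => /(subsetP (admissible_sub AS)); rewrite !inE eqxx.
case: (boolP ((#|S| < k)%N && [forall r in S :\: F, mcost #|S|.+1 <= v r])).
  case/andP=> Sk /forall_inP high; right; exists (y |: S); first by left.
  apply: locally_optimal_optimal kK _ (locally_optimal_force_add kK yS Sk locS high).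
  by apply: admissible_setU1F (admissible_setU1 AS' yD Sk) (setU11 _ _).
rewrite negb_and -leqNgt => not_add.
case: (eqVneq (S :\: F) set0) => [SF0|/(exists_argmin v)[r rSF rmin]].
  left=> X; apply/negP=> /and3P[FX _ Xk]; case/and3P: AS => FS _ _.
  have SF : S \subset F by rewrite -setD_eq0 SF0.
  have Sk : (k <= #|S|)%N.
    by move: not_add; rewrite orbC; case/orP=> // /forall_inPn[r]; rewrite SF0 inE.
  have := subset_leq_card FX; have := subset_leq_card SF; have := subset_leq_card FS.
  by rewrite cardsU1 yF; lia.
right; exists (y |: (S :\ r)); first by right; exists r; case/setDP: rSF.
apply: (locally_optimal_optimal kK); last first.
  apply: (locally_optimal_force_swap yS rSF rmin _ locS) => Sk.
  move: not_add; rewrite leqNgt Sk => /forall_inPn[r' r'SF]; rewrite -ltNge.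
  exact: le_lt_trans (rmin r' r'SF).
apply: admissible_setU1F (setU11 _ _); case/setDP: rSF => rS rF.
exact: admissible_swap AS' rS rF yD yS.
Qed.

Lemma optimal_capS F D k v S : (k < K)%N -> optimal F D k v S ->
  optimal F D k.+1 v S \/
  exists2 w, w \notin S & optimal F D k.+1 v (w |: S) /\ gain v S < gain v (w |: S).
Proof.
move=> kK Sopt; have [swapS dropS addS] := optimal_locally_optimal Sopt.
have [FS SD Sk] : [/\ F \subset S, S \subset D & (#|S| <= k)%N].
  by case: Sopt => /and3P.
have AS : admissible F D k.+1 S by apply/and3P; split=> //; lia.
case: (ltnP #|S| k) => Sk'.
  by left; apply: locally_optimal_optimal => //; split=> // _; exact: addS.
case: (boolP [exists w in D :\: S, mcost #|S|.+1 < v w]) => [|/exists_inPn noW].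
- case/exists_argmax_gt=> w []; rewrite inE => /andP[wS wD] lt wmax.
  right; exists w => //; split; last first.
    by rewrite gain_setU1 // /gain /mcost /= in lt *; lra.
  apply: locally_optimal_optimal => //; first by apply: admissible_setU1 => //; lia.
  split; rewrite ?cardsU1 ?wS ?add1n.
  + move=> a b; rewrite !inE => /orP[/eqP->|aS] aF bD; rewrite negb_or => /andP[bw bS].
      by apply: wmax; rewrite inE bS bD.
    exact: swapS.
  + move=> a; rewrite !inE => /orP[/eqP->|aS] aF; first exact: ltW.
    exact: le_trans (ltW lt) (swapS _ _ aS aF wD wS).
  + by move=> Sk''; lia.
- left; apply: locally_optimal_optimal => //; split=> // _ b bD bS.
  by rewrite leNgt noW // inE bS bD.
Qed.

Lemma optimal_decr_value F D k u v S z : (k <= K)%N -> optimal F D k u S -> z \in S ->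
  (forall x, x != z -> v x = u x) -> v z <= u z ->
  optimal F D k v S \/
  exists S', [/\ S' = S :\ z \/ (exists2 w, w \notin S & S' = w |: (S :\ z)),
                 optimal F D k v S' & gain v S < gain v S'].
Proof.
move=> kK Sopt zS uv vz; have [AS Smax] := Sopt.
have through X : admissible F D k X -> z \in X -> gain v X <= gain v S.
  by move=> AX zX; rewrite !(gain_shift_at uv) //; have := Smax X AX; lra.
case: (boolP (z \in F)) => zF.
  left; split=> // X AX; apply: through => //.
  by case/and3P: AX => FX _ _; exact: subsetP FX z zF.
have [S' form [AS' S'max]] := optimal_forbid kK AS
  (locally_optimal_setU1F z (optimal_locally_optimal Sopt)) zS zF.
have zS' : z \notin S' by apply/negP => /(subsetP (admissible_sub AS')); rewrite !inE eqxx.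
have AS'' : admissible F D k S' by exact: admissible_widen AS' (subxx _) (subsetDl _ _).
have cover X : admissible F D k X -> gain v X <= gain v S \/ gain v X <= gain v S'.
  move=> AX; case: (boolP (z \in X)) => zX; [left; exact: through | right].
  by rewrite !(gain_eq_off uv) //; exact: S'max _ (admissible_setD1D AX zX).
case: (optimal_max2 AS AS'' cover) => [|[S'opt lt]]; [by left | by right; exists S'].
Qed.

Lemma optimal_incr_value F D k u v S y : (k <= K)%N -> optimal F D k u S -> y \notin S ->
  (forall x, x != y -> v x = u x) -> u y <= v y ->
  optimal F D k v S \/
  exists S', [/\ S' = y |: S \/ (exists2 r, r \in S & S' = y |: (S :\ r)),
                 optimal F D k v S' & gain v S < gain v S'].
Proof.
move=> kK Sopt yS uv uy; have [AS Smax] := Sopt.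
have avoid X : admissible F D k X -> y \notin X -> gain v X <= gain v S.
  by move=> AX yX; rewrite !(gain_eq_off uv) //; exact: Smax.
case: (boolP (y \in D)) => yD; last first.
  left; split=> // X AX; apply: (avoid _ AX).
  by apply: contraNN yD => /(subsetP (admissible_sub AX)).
have yF : y \notin F by apply: contra yS; case/and3P: AS => FS _ _; apply: subsetP.
case: (optimal_force kK yD yF (admissible_setD1D AS yS)
  (locally_optimal_setD1D y (optimal_locally_optimal Sopt))) => [none|[S' form [AS' S'max]]].
  left; split=> // X AX; case: (boolP (y \in X)) => yX; last exact: avoid.
  by have := none X; rewrite admissible_setU1F.
have yS' : y \in S' by case/and3P: AS' => /subsetP FS' _ _; apply: FS'; rewrite setU11.
have AS'' : admissible F D k S' by exact: admissible_widen AS' (subsetUr _ _) (subxx _).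
have cover X : admissible F D k X -> gain v X <= gain v S \/ gain v X <= gain v S'.
  move=> AX; case: (boolP (y \in X)) => yX; [right | left; exact: avoid].
  rewrite !(gain_shift_at uv) //.
  by have := S'max X (admissible_setU1F AX yX); lra.
case: (optimal_max2 AS AS'' cover) => [|[S'opt lt]]; [by left | by right; exists S'].
Qed.

Lemma optimal_unforce F D k u S y : (k <= K)%N -> optimal F D k u S -> y \in F ->
  optimal (F :\ y) D k u S \/
  exists S', [/\ S' = S :\ y \/ (exists2 w, w \notin S & S' = w |: (S :\ y)),
                 optimal (F :\ y) D k u S' & gain u S < gain u S'].
Proof.
move=> kK Sopt yF; have [AS Smax] := Sopt.
have yS : y \in S by case/and3P: AS => FS _ _; exact: subsetP FS y yF.
have AS0 : admissible (F :\ y) D k S by apply: admissible_widen AS (subsetDl _ _) (subxx _).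
have locS : locally_optimal (y |: (F :\ y)) D k u S.
  by rewrite setD1K //; exact: optimal_locally_optimal.
have [S' form [AS' S'max]] := optimal_forbid kK AS0 locS yS (negbT (setD11 y F)).
have AS'' : admissible (F :\ y) D k S' by exact: admissible_widen AS' (subxx _) (subsetDl _ _).
have cover X : admissible (F :\ y) D k X -> gain u X <= gain u S \/ gain u X <= gain u S'.
  move=> AX; case: (boolP (y \in X)) => yX; last first.
    by right; exact: S'max _ (admissible_setD1D AX yX).
  by left; apply: Smax; rewrite -(setD1K yF); exact: admissible_setU1F.
case: (optimal_max2 AS0 AS'' cover) => [|[S'opt lt]]; [by left | by right; exists S'].
Qed.

End ConvexSelection.

Lemma ascending_ind (R : realFieldType) (T : finType) (f : T -> R) (P : T -> Prop) :
  (forall s, (forall t, f s < f t -> P t) -> P s) -> forall s, P s.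
Proof.
move=> IH s; have [m] := ubnP #|[set t | f s < f t]|; elim: m s => // m IHm s above.
apply: IH => t lt; apply: IHm; rewrite ltnS in above; apply: (leq_trans _ above).
apply: proper_card.
apply/properP; split; first by apply/subsetP => u; rewrite !inE => /(lt_trans lt).
by exists t; rewrite !inE ?lt // ltxx.
Qed.

Section Game.
Variables (R : realFieldType) (n : nat) (Omega : finType) (G : search_game R n Omega).
Hypothesis G_valid : valid_game G.

Local Notation cl := (cell G).
Local Notation prof := (profile n Omega).
Implicit Types (T S Y Z : {set Omega}) (s : prof).

Lemma cell_self i w : w \in cl i w.
Proof. by case: G_valid. Qed.

Lemma cell_eq i w w' : w' \in cl i w -> cl i w' = cl i w.
Proof. by case: G_valid => _ [H _]; apply: H. Qed.

Lemma cell_sym i w w' : w' \in cl i w -> w \in cl i w'.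
Proof. by move=> /cell_eq ->; exact: cell_self. Qed.

Lemma mem_cellE i w0 x x' : x' \in cl i x -> (x' \in cl i w0) = (x \in cl i w0).
Proof.
by move=> x'x; apply/idP/idP => h; rewrite -(cell_eq h) ?(cell_sym x'x).
Qed.

Lemma prior_ge0 w : 0 <= prior G w.
Proof. by case: G_valid => _ [_ [H _]]. Qed.

Definition mass i w := \sum_(x in cl i w) prior G x.

Lemma mass_gt0 i w : 0 < mass i w.
Proof. by rewrite /mass; case: G_valid => _ [_ [_ [_ [H _]]]]. Qed.

Lemma mass_cell i w w' : w' \in cl i w -> mass i w' = mass i w.
Proof. by move=> /cell_eq; rewrite /mass => ->. Qed.

Lemma rew_antitone (i : 'I_n) a b w : (1 <= a)%N -> (a <= b)%N -> (b <= n)%N ->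
  rew G i b w <= rew G i a w.
Proof.
have rew_succ m : (1 <= m)%N -> (m < n)%N -> rew G i m.+1 w <= rew G i m w.
  by case: G_valid => _ [_ [_ [_ [_ [_ [_ [_ [_ [H _]]]]]]]]]; apply: H.
move=> a1; elim: b => [|b IH] ab bn; first by lia.
case: (ltngtP a b.+1) ab => // [lt _|-> _]; last exact: lexx.
by apply: le_trans (IH lt (ltnW bn)); apply: rew_succ => //; lia.
Qed.

Definition ccost i w j := mass i w * cost G i j.

Lemma ccost_convex i w j : (1 <= j)%N -> (j < cap G i)%N ->
  ccost i w j - ccost i w j.-1 <= ccost i w j.+1 - ccost i w j.
Proof.
move=> j1 jK; rewrite /ccost -!mulrBr; apply: ler_wpM2l; first exact: ltW (mass_gt0 i w).
by case: G_valid => _ [_ [_ [_ [_ [_ [_ [H _]]]]]]]; apply: H => //; lia.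
Qed.

(* Expected reward of location [x] when [k] players search it; [k] is clamped
   to [1..n] so that [value] is antitone on all of [nat]. *)
Definition value (i : 'I_n) x k := prior G x * rew G i (minn (maxn k 1) n) x.

Lemma value_antitone i x k1 k2 : (k1 <= k2)%N -> value i x k2 <= value i x k1.
Proof.
move=> k12; apply: ler_wpM2l; first exact: prior_ge0.
by apply: rew_antitone; case: i => /= m; lia.
Qed.

Definition others s i x := #|[set j | (j != i) && (x \in s j x)]|.

Lemma searchers_others s i x : searchers s x = (others s i x + (x \in s i x))%N.
Proof.
rewrite /searchers /others (cardsD1 i) inE addnC; congr (_ + _)%N.
by apply: eq_card => j; rewrite !inE andbC.
Qed.

Lemma others_lt s i x : (others s i x < n)%N.
Proof.
rewrite /others; apply: (@leq_trans #|[set~ i]|.+1).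
  by rewrite ltnS; apply: subset_leq_card; apply/subsetP => j; rewrite !inE => /andP[].
by rewrite cardsC1 card_ord; case: i => /= m; lia.
Qed.

(* Values seen by player [i] when the count of the others is shifted up on
   [Y] and down on [Z]: after a player leaves [y] (enters [z]), the others
   still best-respond to the count before the move, i.e. with [Y = [set y]]
   ([Z = [set z]]). *)
Definition shifted_count s i Y Z x := ((others s i x + 1 + (x \in Y)) - (x \in Z))%N.
Definition svalue s i Y Z x := value i x (shifted_count s i Y Z x).

Lemma svalue0 s i x : svalue s i set0 set0 x = prior G x * rew G i (others s i x + 1) x.
Proof.
rewrite /svalue /shifted_count /value !inE /= addn0 subn0.
by congr (_ * rew _ _ _ _); have := others_lt s i x; lia.
Qed.

Lemma valid_cell s i w x : valid_profile G s -> x \in cl i w -> s i x = s i w.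
Proof. by move=> vs xw; case: (vs i) => H _; exact: H. Qed.

Lemma valid_sub_cell s i w : valid_profile G s -> s i w \subset cl i w.
Proof. by move=> vs; case: (vs i) => _ []. Qed.

Lemma valid_cap s i w : valid_profile G s -> (#|s i w| <= cap G i)%N.
Proof. by move=> vs; case: (vs i) => _ []. Qed.

Definition reselect s i w0 T : prof :=
  [ffun j => if j == i then [ffun x => if x \in cl i w0 then T else s i x] else s j].

Lemma reselect_other s i w0 T j : j != i -> reselect s i w0 T j = s j.
Proof. by move=> ji; rewrite /reselect ffunE (negbTE ji). Qed.

Lemma reselect_self s i w0 T x :
  reselect s i w0 T i x = if x \in cl i w0 then T else s i x.
Proof. by rewrite /reselect !ffunE eqxx ffunE. Qed.

Lemma others_reselect s i w0 T x : others (reselect s i w0 T) i x = others s i x.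
Proof.
by apply: eq_card => j; rewrite !inE; case: (eqVneq j i) => //= ji; rewrite reselect_other.
Qed.

Lemma svalue_reselect s i w0 T Y Z : svalue (reselect s i w0 T) i Y Z =1 svalue s i Y Z.
Proof. by move=> x; rewrite /svalue /shifted_count others_reselect. Qed.

Lemma others_reselect_other s i w0 T j x : j != i ->
  (others (reselect s i w0 T) j x + (x \in s i x) =
   others s j x + (x \in reselect s i w0 T i x))%N.
Proof.
move=> ji; rewrite /others (cardsD1 i [set _ | _]) [in RHS](cardsD1 i [set _ | _]).
rewrite !inE eq_sym ji /=.
have -> : #|[set k | (k != j) && (x \in reselect s i w0 T k x)] :\ i| =
          #|[set k | (k != j) && (x \in s k x)] :\ i|.
  by apply: eq_card => k; rewrite !inE; case: (eqVneq k i) => //= ki; rewrite reselect_other.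
by rewrite addnAC [in RHS]addnAC [in RHS](addnC (x \in s i x)).
Qed.

Lemma searchers_reselect s i w0 T x :
  searchers (reselect s i w0 T) x = (others s i x + (x \in reselect s i w0 T i x))%N.
Proof. by rewrite (searchers_others _ i) others_reselect. Qed.

Lemma valid_reselect s i w0 T : valid_profile G s -> T \subset cl i w0 ->
  (#|T| <= cap G i)%N -> valid_profile G (reselect s i w0 T).
Proof.
move=> vs TC Tk j; case: (eqVneq j i) => [->|ji]; last by rewrite reselect_other.
case: (vs i) => s_cell [s_sub s_cap]; split; [|split].
- move=> w w' w'w; rewrite !reselect_self (mem_cellE w0 w'w).
  by case: ifP => // _; exact: s_cell.
- by move=> w; rewrite reselect_self; case: ifP => // wC; rewrite (cell_eq wC).
- by move=> w; rewrite reselect_self; case: ifP.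
Qed.

Definition cell_payoff s i w := \sum_(x in cl i w) prior G x * payoff_at G s i x.

Lemma cell_payoff_gain s i w : valid_profile G s ->
  cell_payoff s i w = gain (ccost i w) (svalue s i set0 set0) (s i w).
Proof.
move=> vs; rewrite /cell_payoff /gain /ccost /mass mulr_suml.
under eq_bigr => x xC.
  rewrite /payoff_at (valid_cell vs xC) (searchers_others _ i) (valid_cell vs xC).
  rewrite (_ : _ * _ = (x \in s i w)%:R * svalue s i set0 set0 x - prior G x * cost G i #|s i w|).
    over.
  by rewrite svalue0; case: (x \in s i w) => /=; ring.
rewrite sumrB; congr (_ - _).
rewrite [in RHS]big_mkcond [in LHS]big_mkcond /=; apply: eq_bigr => x _.
case: (boolP (x \in s i w)) => [xS|_]; last by case: (x \in cl i w); rewrite ?mul0r.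
by rewrite (subsetP (valid_sub_cell i w vs) x xS) mul1r.
Qed.

Lemma payoff_cells s i :
  payoff G s i = \sum_w (prior G w / mass i w) * cell_payoff s i w.
Proof.
rewrite /payoff /cell_payoff; symmetry.
under eq_bigr do rewrite mulr_sumr big_mkcond.
rewrite exchange_big; apply: eq_bigr => x _.
transitivity (\sum_(w in cl i x) prior G w / mass i x * (prior G x * payoff_at G s i x)).
  rewrite [RHS]big_mkcond; apply: eq_bigr => w _.
  have -> : (x \in cl i w) = (w \in cl i x) by apply/idP/idP => /cell_sym.
  by case: ifP => // wx; rewrite (mass_cell wx).
by rewrite -!mulr_suml -/(mass i x) mulfV ?mul1r // lt0r_neq0 // mass_gt0.
Qed.

Lemma payoff_reselect s i w0 T : valid_profile G s -> T \subset cl i w0 ->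
  (#|T| <= cap G i)%N ->
  payoff G (reselect s i w0 T) i - payoff G s i =
  gain (ccost i w0) (svalue s i set0 set0) T - gain (ccost i w0) (svalue s i set0 set0) (s i w0).
Proof.
move=> vs TC Tk; have vs' := valid_reselect vs TC Tk.
rewrite /payoff (bigID (mem (cl i w0))) [X in _ - X](bigID (mem (cl i w0))) /=.
rewrite [X in X + _ - _](_ : _ = cell_payoff (reselect s i w0 T) i w0) //.
rewrite [X in _ - (X + _)](_ : _ = cell_payoff s i w0) //.
rewrite !cell_payoff_gain // reselect_self cell_self.
rewrite (eq_bigr (fun x => prior G x * payoff_at G s i x)) => [|x xC]; last first.
  rewrite /payoff_at !reselect_self (negbTE xC) searchers_reselect.
  by rewrite (searchers_others s i) reselect_self (negbTE xC).
rewrite /gain (eq_bigr _ (fun x _ => @svalue_reselect s i w0 T set0 set0 x)); ring.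
Qed.

Lemma improvement_reselect s i w0 T : valid_profile G s -> T \subset cl i w0 ->
  (#|T| <= cap G i)%N ->
  gain (ccost i w0) (svalue s i set0 set0) (s i w0) <
    gain (ccost i w0) (svalue s i set0 set0) T ->
  improvement_step G s (reselect s i w0 T).
Proof.
move=> vs TC Tk lt; split; first exact: valid_reselect.
exists i; split; first by move=> j ji; rewrite reselect_other.
by have := payoff_reselect vs TC Tk; lra.
Qed.

Implicit Types (F : 'I_n -> Omega -> {set Omega}) (k : 'I_n -> Omega -> nat).

Definition stable F k s Y Z := forall i w,
  optimal (ccost i w) (F i w) (cl i w) (k i w) (svalue s i Y Z) (s i w).

Lemma not_stable F k s Y Z : ~ stable F k s Y Z ->
  exists i w, ~ optimal (ccost i w) (F i w) (cl i w) (k i w) (svalue s i Y Z) (s i w).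
Proof.
move=> not_st; apply: NNPP => none; apply: not_st => i w; apply: NNPP => not_opt.
by apply: none; exists i, w.
Qed.

Lemma nash_of_stable s : valid_profile G s ->
  stable (fun _ _ => set0) (fun i _ => cap G i) s set0 set0 -> nash G s.
Proof.
move=> vs st i si vsi.
have vs' : valid_profile G (deviate s i si).
  by move=> j; rewrite /deviate ffunE; case: (eqVneq j i) => [->|].
rewrite !payoff_cells; apply: ler_sum => w _; apply: ler_wpM2l.
  by apply: divr_ge0; [exact: prior_ge0 | exact: ltW (mass_gt0 i w)].
rewrite !cell_payoff_gain // {1}/deviate !ffunE eqxx.
have same : svalue (deviate s i si) i set0 set0 =1 svalue s i set0 set0.
  move=> x; rewrite /svalue /shifted_count /others; congr (value _ _ (_ - _)%N).
  by congr (_ + _ + _)%N; apply: eq_card => j; rewrite !inE /deviate ffunE; case: (eqVneq j i).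
rewrite (gain_eq_values _ _ same); case: (st i w) => _; apply; apply/and3P; split.
- exact: sub0set.
- by case: vsi => _ [].
- by case: vsi => _ [].
Qed.

(* Player [i] must keep [F i w] and choose at most [k i w] locations on the
   cell of [w]. *)
Definition restriction F k := forall i w, (k i w <= cap G i)%N /\
  forall w', w' \in cl i w -> F i w' = F i w /\ k i w' = k i w.

Definition agree_off i w0 F k F' k' := forall j x, j != i \/ x \notin cl i w0 ->
  F' j x = F j x /\ k' j x = k j x.

(* Moving player [i] on the cell of [w0] from [s i w0] to [S'] while replacing
   the shifts [Y], [Z] by [Y'], [Z'] leaves every shifted count unchanged. *)
Definition balanced s i w0 S' Y Z Y' Z' :=
  (forall x, x \notin cl i w0 -> (x \in Y') = (x \in Y) /\ (x \in Z') = (x \in Z)) /\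
  (forall x, x \in cl i w0 ->
     ((x \in S') + (x \in Y') + (x \in Z) = (x \in s i w0) + (x \in Y) + (x \in Z'))%N).

Lemma balanced_reselect s i w0 S' Y Z Y' Z' : valid_profile G s ->
  balanced s i w0 S' Y Z Y' Z' -> forall x,
  ((x \in reselect s i w0 S' i x) + (x \in Y') + (x \in Z) =
   (x \in s i x) + (x \in Y) + (x \in Z'))%N.
Proof.
move=> vs [out inside] x; rewrite reselect_self; case: ifP => xC.
  by rewrite (valid_cell vs xC) inside.
by have [-> ->] := out x (negbT xC).
Qed.

Lemma searchers_balanced s i w0 S' Y Z Y' Z' : valid_profile G s ->
  balanced s i w0 S' Y Z Y' Z' -> forall x,
  (searchers (reselect s i w0 S') x + (x \in Y') + (x \in Z) =
   searchers s x + (x \in Y) + (x \in Z'))%N.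
Proof.
move=> vs bal x; have := balanced_reselect vs bal x.
by rewrite searchers_reselect (searchers_others s i); lia.
Qed.

Lemma stable_reselect F k F' k' s i w0 S' Y Z Y' Z' :
  valid_profile G s -> restriction F' k' -> stable F k s Y Z -> agree_off i w0 F k F' k' ->
  balanced s i w0 S' Y Z Y' Z' ->
  optimal (ccost i w0) (F' i w0) (cl i w0) (k' i w0) (svalue s i Y' Z') S' ->
  stable F' k' (reselect s i w0 S') Y' Z'.
Proof.
move=> vs Fk' st agree bal S'opt j w.
case: (eqVneq j i) => [->|ji].
  case: (boolP (w \in cl i w0)) => wC.
    have [-> ->] := (Fk' i w0).2 w wC.
    rewrite reselect_self wC /ccost (mass_cell wC) (cell_eq wC).
    by apply: (optimal_eq_values _ S'opt) => x _; rewrite svalue_reselect.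
  have [-> ->] := agree i w (or_intror wC); rewrite reselect_self (negbTE wC).
  apply: (optimal_eq_values _ (st i w)) => x xw.
  have xC : x \notin cl i w0 by rewrite (mem_cellE w0 xw).
  by rewrite svalue_reselect /svalue /shifted_count; have [-> ->] := bal.1 x xC.
have [-> ->] := agree j w (or_introl ji); rewrite reselect_other //.
apply: (optimal_eq_values _ (st j w)) => x _; rewrite /svalue /shifted_count.
congr (value _ _ _); have := others_reselect_other s w0 S' x ji.
by have := balanced_reselect vs bal x; lia.
Qed.

Lemma stable_relax F k F' k' s i w0 Y Z :
  valid_profile G s -> restriction F' k' -> stable F k s Y Z -> agree_off i w0 F k F' k' ->
  optimal (ccost i w0) (F' i w0) (cl i w0) (k' i w0) (svalue s i Y Z) (s i w0) ->
  stable F' k' s Y Z.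
Proof.
move=> vs Fk' st agree Sopt j w; case: (eqVneq j i) => [->|ji].
  case: (boolP (w \in cl i w0)) => wC.
    have [-> ->] := (Fk' i w0).2 w wC.
    by rewrite /ccost (mass_cell wC) (cell_eq wC) (valid_cell vs wC).
  by have [-> ->] := agree i w (or_intror wC); exact: st.
by have [-> ->] := agree j w (or_introl ji); exact: st.
Qed.

Lemma agree_off_refl i w0 F k : agree_off i w0 F k F k.
Proof. by []. Qed.

Lemma optimal_choice F k i w0 v S : restriction F k ->
  optimal (ccost i w0) (F i w0) (cl i w0) (k i w0) v S ->
  S \subset cl i w0 /\ (#|S| <= cap G i)%N.
Proof. by move=> Fk [/and3P[_ SC Sk] _]; split=> //; apply: leq_trans Sk (Fk i w0).1. Qed.

Lemma svalue_le s i Y Z Y' Z' x : ((x \in Y') <= (x \in Y))%N -> ((x \in Z) <= (x \in Z'))%N ->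
  svalue s i Y Z x <= svalue s i Y' Z' x.
Proof. by move=> YY' ZZ'; apply: value_antitone; rewrite /shifted_count; lia. Qed.

Lemma svalue_eq s i Y Z Y' Z' x : (x \in Y) = (x \in Y') -> (x \in Z) = (x \in Z') ->
  svalue s i Y Z x = svalue s i Y' Z' x.
Proof. by rewrite /svalue /shifted_count => -> ->. Qed.

Definition reaches F k s := exists p, [/\ improvement_path G s p,
  valid_profile G (last s p) & stable F k (last s p) set0 set0].

Lemma reaches_stable F k s : valid_profile G s -> stable F k s set0 set0 -> reaches F k s.
Proof. by exists [::]. Qed.

Lemma reaches_reselect F k s i w0 S' : valid_profile G s -> S' \subset cl i w0 ->
  (#|S'| <= cap G i)%N ->
  gain (ccost i w0) (svalue s i set0 set0) (s i w0) <
    gain (ccost i w0) (svalue s i set0 set0) S' ->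
  reaches F k (reselect s i w0 S') -> reaches F k s.
Proof.
by move=> vs S'C S'k lt [p [P1 P2 P3]]; exists (reselect s i w0 S' :: p); split=> //=; split;
  last exact: P1; exact: improvement_reselect.
Qed.

(* A weighted potential: with the counts frozen at [B + c], a player that
   swaps one location for another changes it by its own change of payoff. *)
Definition potential (B : Omega -> nat) c s :=
  \sum_i \sum_x (x \in s i x)%:R * value i x (B x + c)%N.

Lemma sum_choice_cell (t : Omega -> {set Omega}) i w0 S (f : Omega -> R) :
  {in cl i w0, forall x, t x = S} -> S \subset cl i w0 ->
  \sum_x (x \in t x)%:R * f x =
  \sum_(x | x \notin cl i w0) (x \in t x)%:R * f x + \sum_(x in S) f x.
Proof.
move=> tS SC; rewrite (bigID (mem (cl i w0))) /= addrC; congr (_ + _).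
rewrite [RHS]big_mkcond [LHS]big_mkcond; apply: eq_bigr => x _ /=.
case: (boolP (x \in cl i w0)) => xC; last first.
  by case: (boolP (x \in S)) => // /(subsetP SC); rewrite (negbTE xC).
by rewrite tS //; case: (x \in S); rewrite ?mul1r ?mul0r.
Qed.

Lemma potential_reselect B c s i w0 T : valid_profile G s -> T \subset cl i w0 ->
  potential B c (reselect s i w0 T) = potential B c s
    - \sum_(x in s i w0) value i x (B x + c)%N + \sum_(x in T) value i x (B x + c)%N.
Proof.
move=> vs TC; rewrite /potential (bigD1 i) // [in RHS](bigD1 i) //=.
rewrite (eq_bigr (fun j => \sum_x (x \in s j x)%:R * value j x (B x + c)%N)) => [|j ji]; last first.
  by rewrite reselect_other.
have newT : {in cl i w0, forall x, reselect s i w0 T i x = T}.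
  by move=> x xC; rewrite reselect_self xC.
have oldS : {in cl i w0, forall x, s i x = s i w0} by move=> x; exact: valid_cell.
rewrite (sum_choice_cell _ newT TC) (sum_choice_cell _ oldS (valid_sub_cell i w0 vs)).
rewrite (eq_bigr (fun x => (x \in s i x)%:R * value i x (B x + c)%N)) => [|x xC]; first ring.
by rewrite reselect_self (negbTE xC).
Qed.

Lemma potential_swap B c s i w0 r y : valid_profile G s -> y \in cl i w0 ->
  r \in s i w0 -> y \notin s i w0 ->
  potential B c (reselect s i w0 (y |: (s i w0 :\ r))) =
    potential B c s - value i r (B r + c)%N + value i y (B y + c)%N.
Proof.
move=> vs yC rS yS; rewrite potential_reselect // ?sum_swap //; first ring.
apply/subsetP=> x; rewrite !inE => /orP[/eqP->//|/andP[_]].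
exact: (subsetP (valid_sub_cell i w0 vs)).
Qed.

Lemma mem_notin_eqF (A : {set Omega}) a x : a \in A -> x \notin A -> (x == a) = false.
Proof. by move=> aA; apply: contraNF => /eqP->. Qed.

Lemma svalue_count s i w0 Y x m : valid_profile G s -> x \in cl i w0 ->
  (searchers s x + (x \in Y) + 1 = m + (x \in s i w0))%N -> svalue s i Y set0 x = value i x m.
Proof.
move=> vs xC; rewrite (searchers_others s i) (valid_cell vs xC) => cnt.
by rewrite /svalue /shifted_count !inE; congr (value _ _ _); lia.
Qed.

Lemma potential_lt_swap B c s i w0 Y r y : valid_profile G s -> y \in cl i w0 ->
  r \in s i w0 -> y \notin s i w0 ->
  (searchers s y + (y \in Y) + 1 = B y + c)%N -> (searchers s r + (r \in Y) = B r + c)%N ->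
  gain (ccost i w0) (svalue s i Y set0) (s i w0) <
    gain (ccost i w0) (svalue s i Y set0) (y |: (s i w0 :\ r)) ->
  potential B c s < potential B c (reselect s i w0 (y |: (s i w0 :\ r))).
Proof.
move=> vs yC rS yS cy cr; have rC := subsetP (valid_sub_cell i w0 vs) r rS.
have val_y : svalue s i Y set0 y = value i y (B y + c).
  by apply: (svalue_count vs yC); rewrite (negbTE yS) addn0.
have val_r : svalue s i Y set0 r = value i r (B r + c).
  by apply: (svalue_count vs rC); rewrite rS cr.
by rewrite potential_swap // gain_swap // val_y val_r; lra.
Qed.

Lemma optimal_reshift s i w0 (Fw : {set Omega}) (kw : nat) Y Z Y' Z' S :
  optimal (ccost i w0) Fw (cl i w0) kw (svalue s i Y Z) S ->
  (forall x, x \in S -> (x \in Y') <= (x \in Y) /\ (x \in Z) <= (x \in Z'))%N ->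
  (forall x, x \notin S -> (x \in Y) <= (x \in Y') /\ (x \in Z') <= (x \in Z))%N ->
  optimal (ccost i w0) Fw (cl i w0) kw (svalue s i Y' Z') S.
Proof.
move=> Sopt inS outS; apply: (optimal_shift_values Sopt) => x _.
  by case/inS; apply: svalue_le.
by case/outS; apply: svalue_le.
Qed.

Lemma leave_response F k s i w0 y : restriction F k -> stable F k s [set y] set0 ->
  ~ optimal (ccost i w0) (F i w0) (cl i w0) (k i w0) (svalue s i set0 set0) (s i w0) ->
  exists S', [/\ S' = y |: s i w0 \/ (exists2 r, r \in s i w0 & S' = y |: (s i w0 :\ r)),
    y \notin s i w0,
    optimal (ccost i w0) (F i w0) (cl i w0) (k i w0) (svalue s i set0 set0) S' &
    gain (ccost i w0) (svalue s i set0 set0) (s i w0) <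
      gain (ccost i w0) (svalue s i set0 set0) S'].
Proof.
move=> Fk st not_opt.
have off_y x : x != y -> svalue s i set0 set0 x = svalue s i [set y] set0 x.
  by move=> xy; apply: svalue_eq; rewrite ?inE ?(negbTE xy).
have at_y : svalue s i [set y] set0 y <= svalue s i set0 set0 y.
  by apply: svalue_le; rewrite ?inE.
have Sopt := st i w0; case: (boolP (y \in s i w0)) => yS.
  case: not_opt; apply: (optimal_shift_values Sopt) => x _ xS.
    by case: (eqVneq x y) => [->//|/off_y->].
  by rewrite off_y //; apply: contraNneq xS => ->.
case: (optimal_incr_value (@ccost_convex i w0) (Fk i w0).1 Sopt yS off_y at_y)
  => [//|[S' [form S'opt lt]]].
by exists S'.
Qed.

Lemma enter_response F k s Y z i w0 : restriction F k -> z \notin Y ->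
  stable F k s Y [set z] ->
  ~ optimal (ccost i w0) (F i w0) (cl i w0) (k i w0) (svalue s i Y set0) (s i w0) ->
  exists S', [/\ S' = s i w0 :\ z \/ (exists2 w, w \notin s i w0 & S' = w |: (s i w0 :\ z)),
    z \in s i w0,
    optimal (ccost i w0) (F i w0) (cl i w0) (k i w0) (svalue s i Y set0) S',
    gain (ccost i w0) (svalue s i Y set0) (s i w0) <
      gain (ccost i w0) (svalue s i Y set0) S' &
    gain (ccost i w0) (svalue s i set0 set0) (s i w0) <
      gain (ccost i w0) (svalue s i set0 set0) S'].
Proof.
move=> Fk zY st not_opt.
have off_z x : x != z -> svalue s i Y set0 x = svalue s i Y [set z] x.
  by move=> xz; apply: svalue_eq; rewrite ?inE ?(negbTE xz).
have at_z : svalue s i Y set0 z <= svalue s i Y [set z] z by apply: svalue_le; rewrite ?inE.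
have Sopt := st i w0; case: (boolP (z \in s i w0)) => zS; last first.
  case: not_opt; apply: (optimal_shift_values Sopt) => x _ xS.
    by rewrite off_z //; apply: contraNneq zS => <-.
  by case: (eqVneq x z) => [->//|/off_z->].
case: (optimal_decr_value (@ccost_convex i w0) (Fk i w0).1 Sopt zS off_z at_z)
  => [//|[S' [form S'opt lt]]].
exists S'; split=> //; apply: (gain_lt_raise _ _ lt) => x.
  by apply: svalue_le; rewrite ?inE.
move=> xS xS'; have -> : x = z.
  by apply: contraNeq xS' => xz; case: form => [|[w _]] ->; rewrite !inE xz xS ?orbT.
by apply: svalue_eq; rewrite ?inE ?(negbTE zY).
Qed.

Lemma singleton_of_card_le1 (A : {set Omega}) a : a \in A -> (#|A| <= 1)%N -> A = [set a].
Proof. by move=> aA A1; apply/eqP; rewrite eq_sym eqEcard sub1set aA cards1. Qed.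

Lemma reaches_after_leave F k B : restriction F k -> forall s Y,
  (#|Y| <= 1)%N -> valid_profile G s -> stable F k s Y set0 ->
  (forall x, searchers s x + (x \in Y) = B x)%N -> reaches F k s.
Proof.
move=> Fk s; elim/(ascending_ind (f := potential B 0)): s => s IH Y Y1 vs st count.
case: (classic (stable F k s set0 set0)) => [|/not_stable[i [w0 not_opt]]].
  exact: reaches_stable.
case: (set_0Vmem Y) => [Y0|[y /singleton_of_card_le1/(_ Y1) Yy]]; first by rewrite Y0 in st.
subst Y; have [S' [form yS S'opt lt]] := leave_response Fk st not_opt.
have [S'C S'k] := optimal_choice Fk S'opt; have vs' := valid_reselect vs S'C S'k.
apply: (reaches_reselect vs S'C S'k lt).
have yC : y \in cl i w0 by apply: (subsetP S'C); case: form => [|[r _]] ->; rewrite setU11.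
case: form => [|[r rS]] eS'.
  apply: reaches_stable => //; apply: (stable_reselect vs Fk st (agree_off_refl F k) _ S'opt).
  split=> x xC; first by rewrite !inE (mem_notin_eqF yC xC).
  by rewrite eS' mem_setU1_count // !inE /= !addn0.
have ry : r != y by apply: contraNneq yS => <-.
have rC : r \in cl i w0 := subsetP (valid_sub_cell i w0 vs) r rS.
have bal : balanced s i w0 S' [set y] set0 [set r] set0.
  split=> x xC; last by rewrite eS' !in_set1 in_set0 !addn0 mem_swap_count.
  by rewrite !inE (mem_notin_eqF yC xC) (mem_notin_eqF rC xC).
apply: (IH _ _ [set r] _ vs'); rewrite ?cards1 //.
- rewrite eS'; apply: (potential_lt_swap (Y := set0) vs yC rS yS); last by rewrite -eS'.
    by rewrite -(count y) !inE eqxx /= !addn0.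
  by rewrite -(count r) !inE (negbTE ry) /= !addn0.
- apply: (stable_reselect vs Fk st (agree_off_refl F k) bal).
  apply: (optimal_reshift S'opt) => x xS'; rewrite !inE //.
  suff /negbTE-> : x != r by [].
  by apply: contraTneq xS' => ->; rewrite eS' !inE eqxx (negbTE ry).
- move=> x; have := searchers_balanced vs bal x; rewrite !in_set0 /= !addn0 => ->.
  exact: count.
Qed.

Lemma reaches_after_enter F k B : restriction F k -> forall s Y z,
  (#|Y| <= 1)%N -> z \notin Y -> valid_profile G s -> stable F k s Y [set z] ->
  (forall x, searchers s x + (x \in Y) = B x + (x \in [set z]))%N -> reaches F k s.
Proof.
move=> Fk s; elim/(ascending_ind (f := potential B 1)): s => s IH Y z Y1 zY vs st count.
case: (classic (stable F k s Y set0)) => [st0|/not_stable[i [w0 not_opt]]].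
  exact: (reaches_after_leave (B := fun x => (B x + (x \in [set z]))%N) Fk Y1 vs st0 count).
have [S' [form zS S'opt ltY lt]] := enter_response Fk zY st not_opt.
have [S'C S'k] := optimal_choice Fk S'opt; have vs' := valid_reselect vs S'C S'k.
have zC : z \in cl i w0 := subsetP (valid_sub_cell i w0 vs) z zS.
apply: (reaches_reselect vs S'C S'k lt).
case: form => [|[w wS]] eS'.
  have bal : balanced s i w0 S' Y [set z] Y set0.
    split=> x xC; first by rewrite !inE (mem_notin_eqF zC xC).
    by rewrite eS' in_set0 in_set1 addn0 addnAC mem_setD1_count.
  apply: (reaches_after_leave (B := B) Fk Y1 vs').
    exact: (stable_reselect vs Fk st (agree_off_refl F k) bal S'opt).
  move=> x; apply: (@addIn (x \in [set z])).
  by rewrite (searchers_balanced vs bal x) in_set0 addn0 count.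
have wS' : w \in S' by rewrite eS' setU11.
have wC : w \in cl i w0 := subsetP S'C w wS'.
have wz : w != z by apply: contraNneq wS => ->.
case: (boolP (w \in Y)) => wY.
  move: (singleton_of_card_le1 wY Y1) => Yw; subst Y; apply: reaches_stable => //.
  have bal : balanced s i w0 S' [set w] [set z] set0 set0.
    split=> x xC; first by rewrite !inE (mem_notin_eqF zC xC) (mem_notin_eqF wC xC).
    by rewrite eS' !in_set1 !in_set0 !addn0 mem_swap_count.
  apply: (stable_reselect vs Fk st (agree_off_refl F k) bal).
  apply: (optimal_reshift S'opt) => x xS'; rewrite !inE //.
  by suff /negbTE-> : x != w by []; apply: contraNneq xS' => ->.
have bal : balanced s i w0 S' Y [set z] Y [set w].
  split=> x xC; first by rewrite !inE (mem_notin_eqF zC xC) (mem_notin_eqF wC xC).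
  by rewrite eS' !in_set1 addnAC mem_swap_count // addnAC.
apply: (IH _ _ Y w Y1 wY vs').
- rewrite eS'; apply: (potential_lt_swap (Y := Y) vs wC zS wS); last by rewrite -eS'.
    by rewrite count in_set1 (negbTE wz) addn0.
  by rewrite count in_set1 eqxx.
- apply: (stable_reselect vs Fk st (agree_off_refl F k) bal).
  apply: (optimal_reshift S'opt) => x xS'; rewrite !inE ?leqnn //.
  by suff /negbTE-> : x != w by []; apply: contraNneq xS' => ->.
- move=> x; apply: (@addIn (x \in [set z])).
  by rewrite (searchers_balanced vs bal x) count addnAC.
Qed.

Lemma stable_after_move F k F' k' s i w0 S' : valid_profile G s -> restriction F' k' ->
  stable F k s set0 set0 -> agree_off i w0 F k F' k' -> S' \subset cl i w0 ->
  optimal (ccost i w0) (F' i w0) (cl i w0) (k' i w0) (svalue s i set0 set0) S' ->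
  stable F' k' (reselect s i w0 S') (s i w0 :\: S') (S' :\: s i w0) /\
  forall x, (searchers (reselect s i w0 S') x + (x \in s i w0 :\: S') =
             searchers s x + (x \in S' :\: s i w0))%N.
Proof.
move=> vs Fk' st agree S'C S'opt.
have bal : balanced s i w0 S' set0 set0 (s i w0 :\: S') (S' :\: s i w0).
  split=> x xC; last by rewrite !inE; case: (x \in S'); case: (x \in s i w0).
  have xS : x \notin s i w0 := contra (subsetP (valid_sub_cell i w0 vs) x) xC.
  have xS' : x \notin S' := contra (subsetP S'C x) xC.
  by rewrite !inE (negbTE xS) (negbTE xS') !andbF.
split; last by move=> x; have := searchers_balanced vs bal x; rewrite !in_set0 /= !addn0.
apply: (stable_reselect vs Fk' st agree bal).
by apply: (optimal_reshift S'opt) => x xS'; rewrite !inE ?xS' ?(negbTE xS') /= ?andbF.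
Qed.

Lemma reaches_after_move F k F' k' s i w0 S' : restriction F' k' -> valid_profile G s ->
  stable F k s set0 set0 -> agree_off i w0 F k F' k' ->
  optimal (ccost i w0) (F' i w0) (cl i w0) (k' i w0) (svalue s i set0 set0) S' ->
  (#|s i w0 :\: S'| <= 1)%N -> (#|S' :\: s i w0| <= 1)%N ->
  reaches F' k' (reselect s i w0 S').
Proof.
move=> Fk' vs st agree S'opt Y1 Z1; have [S'C S'k] := optimal_choice Fk' S'opt.
have [st' count] := stable_after_move vs Fk' st agree S'C S'opt.
have vs' := valid_reselect vs S'C S'k.
case: (set_0Vmem (S' :\: s i w0)) => [Z0|[w wZ]].
  rewrite Z0 in st' count; apply: (reaches_after_leave (B := searchers s) Fk' Y1 vs' st').
  by move=> x; rewrite count in_set0 addn0.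
rewrite (singleton_of_card_le1 wZ Z1) in st' count.
apply: (reaches_after_enter (B := searchers s) Fk' Y1 _ vs' st' count).
by move: wZ; rewrite !inE => /andP[_ ->].
Qed.

Definition cell_update (A : Type) (f : 'I_n -> Omega -> A) i w0 (a : A) j x :=
  if (j == i) && (x \in cl i w0) then a else f j x.

Lemma cell_update_in (A : Type) (f : 'I_n -> Omega -> A) i w0 a x :
  x \in cl i w0 -> cell_update f i w0 a i x = a.
Proof. by rewrite /cell_update eqxx => ->. Qed.

Lemma cell_update_off (A : Type) (f : 'I_n -> Omega -> A) i w0 a j x :
  j != i \/ x \notin cl i w0 -> cell_update f i w0 a j x = f j x.
Proof. by rewrite /cell_update => -[/negbTE-> | /negbTE->]; rewrite ?andbF. Qed.

Lemma cell_update_cell (A : Type) (f : 'I_n -> Omega -> A) i w0 a j x w' :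
  w' \in cl j x -> f j w' = f j x -> cell_update f i w0 a j w' = cell_update f i w0 a j x.
Proof.
move=> w'x fw'; rewrite /cell_update fw'; case: (eqVneq j i) => //= ji; subst j.
by rewrite (mem_cellE w0 w'x).
Qed.

Lemma restriction_update_forced F k i w0 A :
  restriction F k -> restriction (cell_update F i w0 A) k.
Proof.
move=> Fk j x; split; first exact: (Fk j x).1.
move=> w' w'x; have [Fw' kw'] := (Fk j x).2 w' w'x.
by split=> //; apply: cell_update_cell.
Qed.

Lemma restriction_update_bound F k i w0 m : restriction F k -> (m <= cap G i)%N ->
  restriction F (cell_update k i w0 m).
Proof.
move=> Fk mK j x; split.
  by rewrite /cell_update; case: ifP => [/andP[/eqP-> _] // | _]; exact: (Fk j x).1.
move=> w' w'x; have [Fw' kw'] := (Fk j x).2 w' w'x.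
by split=> //; apply: cell_update_cell.
Qed.

Definition slack F k := (\sum_i \sum_x (#|F i x| + (cap G i - k i x)))%N.

Lemma slack_lt F k F' k' i w0 : agree_off i w0 F k F' k' ->
  (forall x, x \in cl i w0 ->
     (#|F' i x| + (cap G i - k' i x) < #|F i x| + (cap G i - k i x))%N) ->
  (slack F' k' < slack F k)%N.
Proof.
move=> agree dec; rewrite /slack (bigD1 i) //= [X in (_ < X)%N](bigD1 i) //=.
rewrite (eq_bigr (fun j => \sum_x (#|F j x| + (cap G j - k j x)))%N) => [|j ji]; last first.
  by apply: eq_bigr => x _; have [-> ->] := agree j x (or_introl ji).
rewrite ltn_add2r (bigD1 w0) //= [X in (_ < X)%N](bigD1 w0) //=.
rewrite -addSn; apply: leq_add; first exact: dec w0 (cell_self i w0).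
apply: leq_sum => x _; case: (boolP (x \in cl i w0)) => xC; first exact: ltnW (dec x xC).
by have [-> ->] := agree i x (or_intror xC).
Qed.

Lemma reaches_raise_bound F k s i w0 : restriction F k -> valid_profile G s ->
  stable F k s set0 set0 -> (k i w0 < cap G i)%N ->
  exists k', [/\ (slack F k' < slack F k)%N, restriction F k' & reaches F k' s].
Proof.
move=> Fk vs st kK; set k' := cell_update k i w0 (k i w0).+1.
have agree : agree_off i w0 F k F k' by move=> j x off; split=> //; exact: cell_update_off.
have Fk' : restriction F k' by exact: restriction_update_bound.
have k'w0 : k' i w0 = (k i w0).+1 by rewrite /k' cell_update_in ?cell_self.
exists k'; split=> //.
  apply: (slack_lt agree) => x xC; rewrite /k' cell_update_in //.
  by have [_ ->] := (Fk i w0).2 x xC; rewrite ltn_add2l; lia.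
case: (optimal_capS (@ccost_convex i w0) kK (st i w0)) => [Sopt|[w wS [S'opt lt]]].
  by apply: reaches_stable => //; apply: (stable_relax vs Fk' st agree); rewrite k'w0.
rewrite -k'w0 in S'opt; have [S'C S'k] := optimal_choice Fk' S'opt.
apply: (reaches_reselect vs S'C S'k lt); apply: (reaches_after_move Fk' vs st agree S'opt).
  by apply: (card_setD_le1 (y := w)); exact: subset_trans (subsetDl _ _) (subsetUr _ _).
by apply: (card_setD_le1 (y := w)); rewrite subDset subxx.
Qed.

Lemma reaches_unforce F k s i w0 y : restriction F k -> valid_profile G s ->
  stable F k s set0 set0 -> y \in F i w0 ->
  exists F', [/\ (slack F' k < slack F k)%N, restriction F' k & reaches F' k s].
Proof.
move=> Fk vs st yF; set F' := cell_update F i w0 (F i w0 :\ y).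
have agree : agree_off i w0 F k F' k by move=> j x off; split=> //; exact: cell_update_off.
have Fk' : restriction F' k by exact: restriction_update_forced.
have F'w0 : F' i w0 = F i w0 :\ y by rewrite /F' cell_update_in ?cell_self.
exists F'; split=> //.
  apply: (slack_lt agree) => x xC; rewrite /F' cell_update_in //.
  by have [-> _] := (Fk i w0).2 x xC; rewrite ltn_add2r [X in (_ < X)%N](cardsD1 y) yF.
case: (optimal_unforce (@ccost_convex i w0) (Fk i w0).1 (st i w0) yF)
  => [Sopt|[S' [form S'opt lt]]].
  by apply: reaches_stable => //; apply: (stable_relax vs Fk' st agree); rewrite F'w0.
rewrite -F'w0 in S'opt; have [S'C S'k] := optimal_choice Fk' S'opt.
apply: (reaches_reselect vs S'C S'k lt); apply: (reaches_after_move Fk' vs st agree S'opt).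
  apply: (card_setD_le1 (y := y)).
  by case: form => [|[w _]] ->; [exact: subxx | exact: subsetUr].
case: form => [|[w _]] ->; [apply: (card_setD_le1 (y := y)) | apply: (card_setD_le1 (y := w))].
  by rewrite subDset; exact: subset_trans (subsetDl _ _) (subsetUr _ _).
by rewrite subDset; exact: setUS (subsetDl _ _).
Qed.

Lemma nash_or_relax F k s : restriction F k -> valid_profile G s -> stable F k s set0 set0 ->
  nash G s \/ exists F' k',
    [/\ (slack F' k' < slack F k)%N, restriction F' k' & reaches F' k' s].
Proof.
move=> Fk vs st.
case: (boolP [exists i, exists w, (F i w != set0) || (k i w < cap G i)%N]).
  case/existsP=> i /existsP[w0] /orP[/set0Pn[y yF] | kK]; right.
    by have [F' [? ? ?]] := reaches_unforce Fk vs st yF; exists F', k.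
  by have [k' [? ? ?]] := reaches_raise_bound Fk vs st kK; exists F, k'.
rewrite negb_exists => /forallP none; left; apply: nash_of_stable vs _ => i w.
have := none i; rewrite negb_exists => /forallP/(_ w); rewrite negb_or -leqNgt.
case/andP=> /negPn/eqP F0 kK; have := st i w; rewrite F0.
suff -> : k i w = cap G i by [].
by apply/eqP; rewrite eqn_leq kK (Fk i w).1.
Qed.

Lemma improvement_path_cat s p q : improvement_path G s p ->
  improvement_path G (last s p) q -> improvement_path G s (p ++ q).
Proof. by elim: p s => [|t p IHp] s //= [st pt] qt; split=> //; exact: IHp. Qed.

Lemma nash_reachable F k s : restriction F k -> valid_profile G s -> stable F k s set0 set0 ->
  exists p, improvement_path G s p /\ nash G (last s p).
Proof.
move: {2}(slack F k) (leqnn (slack F k)) => m; elim: m F k s => [|m IH] F k s sl Fk vs st;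
  case: (nash_or_relax Fk vs st) => [|[F' [k' [lt Fk' [p [P1 P2 P3]]]]]]; try by exists [::].
  by lia.
have [q [Q1 Q2]] := IH F' k' (last s p) ltac:(lia) Fk' P2 P3.
by exists (p ++ q); rewrite last_cat; split=> //; exact: improvement_path_cat.
Qed.

Lemma restriction_of_profile s : valid_profile G s ->
  restriction (fun i x => s i x) (fun i x => #|s i x|).
Proof.
move=> vs i w; split; first exact: valid_cap.
by move=> w' w'w; rewrite (valid_cell vs w'w).
Qed.

Lemma stable_of_profile s : valid_profile G s ->
  stable (fun i x => s i x) (fun i x => #|s i x|) s set0 set0.
Proof.
move=> vs i w; split; first by apply/and3P; split=> //; exact: valid_sub_cell.
move=> X /and3P[SX _ Xk]; suff -> : X = s i w by [].
by apply/eqP; rewrite eq_sym eqEcard SX.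
Qed.

End Game.

Theorem proposition1 (R : realFieldType) (n : nat) (Omega : finType)
    (G : search_game R n Omega) :
  valid_game G ->
  forall s1 : profile n Omega, valid_profile G s1 ->
  exists p : seq (profile n Omega),
    improvement_path G s1 p /\ nash G (last s1 p).
Proof.
move=> G_valid s1 vs1.
exact (nash_reachable G_valid (restriction_of_profile vs1) vs1 (stable_of_profile vs1)).
Qed.
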